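(* Let $p_1\in \mathbb{P}^2$ and let $p_2$ be a point which is either in the first neighbourhood of $p_1$ or a distinct point of $\mathbb{P}^2$. Then there exist a morphism $\nu\colon\mathbb{A}^1\to \mathrm{Bir}(\mathbb{P}^2)$ and a morphism $p_3\colon \mathbb{A}^1\to \mathbb{P}^2$ such that: $(1)$ for $t\not=0$, $\nu(t)$ is a quadratic map with base-points $p_1,p_2,p_3(t)$; $(2)$ the map $\nu(0)$ is the identity and $p_3(0)$ is collinear with $p_1$ and $p_2$.
   Context: Work over an algebraically closed field of characteristic $0$. $\mathrm{Bir}(\mathbb{P}^2)$ is the group of birational transformations of $\mathbb{P}^2$. A morphism $A\to\mathrm{Bir}(\mathbb{P}^2)$ from an irreducible variety $A$ is a family in the sense of Demazure: an $A$-birational map $f$ of $A\times\mathbb{P}^2$, $(a,x)\dashrightarrow(a,p_2(f(a,x)))$, inducing an isomorphism between open subsets surjecting onto $A$, with $a\mapsto f_a$. A quadratic map is a birational map of degree $2$. *)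

From HB Require Import structures.
From mathcomp Require Import all_boot all_order all_algebra.
From mathcomp Require Import mpoly.
Set Implicit Arguments. Unset Strict Implicit. Unset Printing Implicit Defensive.
Import Order.TTheory GRing.Theory.
Local Open Scope ring_scope.

Section Cremona.
Variable k : closedFieldType.

(* Homogeneous coordinates: a point of P^2 is a nonzero vector of k^3
   (taken up to scalars); a line is a nonzero linear form a0 x0+a1 x1+a2 x2. *)
Definition vec3 := 'I_3 -> k.
Definition nonzero3 (v : vec3) : Prop := exists i, v i != 0.
Definition proj_eq (u v : vec3) : Prop := exists c : k, c != 0 /\ forall i, u i = c * v i.
Definition pairing (a v : vec3) : k := \sum_(i < 3) a i * v i.
Definition on_line (a v : vec3) : Prop := pairing a v = 0.

(* Points of the bubble space used here: a proper point of P^2, or a point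
   in the first neighbourhood of a given point p, i.e. a tangent direction
   at p, encoded by the line through p having that direction. *)
Inductive bpoint := Proper of vec3 | InfNear of vec3 .

Definition first_nbhd_or_distinct (p1 : vec3) (p2 : bpoint) : Prop :=
  match p2 with
  | Proper q => nonzero3 q /\ ~ proj_eq q p1
  | InfNear a => nonzero3 a /\ on_line a p1
  end.

Definition passes_through (p1 : vec3) (Q : {mpoly k[3]}) (b : bpoint) : Prop :=
  match b with
  | Proper q => Q.@[q] = 0
  | InfNear a => Q.@[p1] = 0 /\
      forall q : vec3, on_line a q -> \sum_(i < 3) q i * (mderiv i Q).@[p1] = 0
  end.

Definition distinct_from (q : vec3) (b : bpoint) : Prop :=
  match b with
  | Proper r => ~ proj_eq q r
  | InfNear _ => True
  end.

(* Rational self-maps of P^2 given by triples of homogeneous polynomials. *)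
Definition pmap := 'I_3 -> {mpoly k[3]}.
Definition homog_map (d : nat) (f : pmap) : Prop := forall i, f i \is d.-homog.
Definition compm (g f : pmap) : pmap := fun i => g i \mPo [tuple f j | j < 3].

Definition is_identity_map (f : pmap) : Prop :=
  exists h : {mpoly k[3]}, h != 0 /\ forall i, f i = h * 'X_i.

Definition birational_pair (f g : pmap) : Prop :=
  (exists i, f i != 0) /\ (exists i, g i != 0) /\
  is_identity_map (compm g f) /\ is_identity_map (compm f g).

Definition coprime3 (Q : pmap) : Prop :=
  forall r : {mpoly k[3]}, (forall i, exists s, Q i = r * s) -> (msize r <= 1)%N.

(* f is a quadratic map (birational map of degree 2, birationality being
   part of the family hypothesis) whose base points are p1, p2, p3:
   the reduced representative Q of f consists of coprime quadrics, all of
   which pass through the three distinct (bubble) points p1, p2, p3.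
   (A quadratic map has exactly three base points, so these are all.) *)
Definition quadratic_with_base_points (f : pmap) (p1 : vec3) (p2 : bpoint)
    (p3 : vec3) : Prop :=
  exists (c : {mpoly k[3]}) (Q : pmap),
    [/\ c != 0, homog_map 2 Q, coprime3 Q, forall i, f i = c * Q i &
    [/\ forall i, passes_through p1 (Q i) (Proper p1),
        forall i, passes_through p1 (Q i) p2,
        forall i, passes_through p1 (Q i) (Proper p3),
        ~ proj_eq p3 p1 & distinct_from p3 p2]].

(* Families over A^1: polynomials in t with coefficients in k[x0,x1,x2]. *)
Definition fpmap := 'I_3 -> {poly {mpoly k[3]}}.
Definition fiber (F : fpmap) (t : k) : pmap := fun i => (F i).[t%:MP].

(* A morphism A^1 -> Bir(P^2): an A^1-birational map of A^1 x P^2, given by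
   polynomials F (homogeneous of a fixed degree d in x) with inverse G
   (homogeneous of degree e in x), restricting to a birational map on each
   fibre (so it is an isomorphism between open sets surjecting onto A^1). *)
Definition bir_family (F G : fpmap) : Prop :=
  exists d e : nat,
    [/\ forall i j, (F i)`_j \is d.-homog,
        forall i j, (G i)`_j \is e.-homog &
        forall t : k, birational_pair (fiber F t) (fiber G t)].

(* A morphism A^1 -> P^2: polynomials without common zero. *)
Definition vfamily := 'I_3 -> {poly k}.
Definition morph_A1_P2 (P : vfamily) : Prop := forall t : k, exists i, (P i).[t] != 0.
Definition vfiber (P : vfamily) (t : k) : vec3 := fun i => (P i).[t].

Definition collinear3 (p1 : vec3) (p2 : bpoint) (p3 : vec3) : Prop :=
  match p2 with
  | Proper q => exists a, nonzero3 a /\ on_line a p1 /\ on_line a q /\ on_line a p3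
  | InfNear a => on_line a p3
  end.

End Cremona.

From Pilot Require Import Defs.
From HB Require Import structures.
From mathcomp Require Import all_boot all_order all_algebra.
From mathcomp Require Import mpoly ring zify.
Import GRing.Theory.
Local Open Scope ring_scope.
Set Implicit Arguments. Unset Strict Implicit.

(* Choose projective coordinates in which p1 = (1:0:0) and p2 = (0:1:0), or, when p2 is
   infinitely near p1, in which p2 is the direction of the line z = 0 at p1.  There the
   families
     A_t = (xz - t xy : yz - t xy : z^2 - t xz),
     B_t = (xz - t y^2 : yz - t y^2 : z^2 - t^2 y^2)
   do the job: both specialise to z.id at t = 0, their third base point (1:1:t) lies on
   the line z = 0 through p1 and p2 at t = 0, and they have explicit quadratic inverse
   families, so that every required property is a polynomial identity.  Conjugating by
   the change of coordinates carries them to the given points. *)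

(* [seq.pmap] shadows the type of polynomial maps of [Defs]. *)
Local Notation pmap := Defs.pmap.

Notation o0 := (@Ordinal 3 0 isT).
Notation o1 := (@Ordinal 3 1 isT).
Notation o2 := (@Ordinal 3 2 isT).

Lemma ord3P (i : 'I_3) : i = o0 \/ i = o1 \/ i = o2.
Proof.
by case: i => [[|[|[|//]]] ?]; [left | right; left | right; right]; apply: val_inj.
Qed.

Lemma big_ord3 (R : nmodType) (F : 'I_3 -> R) : \sum_(i < 3) F i = F o0 + F o1 + F o2.
Proof.
by rewrite !big_ord_recr big_ord0 /= add0r; congr (F _ + F _ + F _); apply: val_inj.
Qed.

Definition mk3 {T : Type} (a b c : T) (j : 'I_3) : T :=
  match nat_of_ord j with 0 => a | 1 => b | _ => c end.

Lemma sum_delta_scale (R : nzRingType) (V : lmodType R) (F : 'I_3 -> V) j :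
  \sum_(l < 3) (j == l)%:R *: F l = F j.
Proof.
rewrite (bigD1 j) //= eqxx scale1r big1 ?addr0 // => l /negPf.
by rewrite eq_sym => ->; rewrite scale0r.
Qed.

Lemma sum_delta_mul (R : nzRingType) (F : 'I_3 -> R) j :
  \sum_(l < 3) (j == l)%:R * F l = F j.
Proof. exact: (@sum_delta_scale R R^o). Qed.

Lemma mk3_map (T U : Type) (f : T -> U) (a b c : T) j : f (mk3 a b c j) = mk3 (f a) (f b) (f c) j.
Proof. by case: (ord3P j) => [->|[->|->]]. Qed.

(** * Polynomial calculus *)

Definition dderiv (R : comNzRingType) (n : nat) (v x : 'I_n -> R) (f : {mpoly R[n]}) : R :=
  \sum_(m < n) v m * (f^`M(m)).@[x].

Section Composition.
Variables (R : comNzRingType) (n p q : nat).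
Implicit Types (f : {mpoly R[n]}) (lq : n.-tuple {mpoly R[p]}).

Lemma comp_mpolyA f lq (lr : p.-tuple {mpoly R[q]}) :
  (f \mPo lq) \mPo lr = f \mPo [tuple tnth lq i \mPo lr | i < n].
Proof.
rewrite [f \mPo lq]comp_mpolyEX [RHS]comp_mpolyEX raddf_sum /=.
apply: eq_bigr => m _.
rewrite comp_mpolyZ !comp_mpolyX rmorph_prod /=; congr (_ *: _).
by apply: eq_bigr => i _; rewrite rmorphXn tnth_mktuple.
Qed.

Lemma dhomog_comp_mpoly d e f lq :
  f \is d.-homog -> (forall i, tnth lq i \is e.-homog) -> f \mPo lq \is (e * d).-homog.
Proof.
move=> /dhomogP homf homl; rewrite comp_mpolyEX big_seq; apply: rpred_sum => m mf.
apply: dhomogZ; rewrite comp_mpolyX -(homf m mf).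
suff : \prod_(i < n) tnth lq i ^+ m i \is (e * \sum_(i < n) m i)%N.-homog by rewrite -mdegE.
elim/big_rec2: _ => [|i c r _ homr]; first by rewrite muln0; exact: dhomog1.
by rewrite mulnDr; apply: dhomogM homr; apply: dhomogMn.
Qed.

Lemma mpoly_gen_ind (P : {mpoly R[n]} -> Prop) :
  (forall c, P c%:MP) -> (forall i, P 'X_i) ->
  (forall f g, P f -> P g -> P (f + g)) -> (forall f g, P f -> P g -> P (f * g)) ->
  forall f, P f.
Proof.
move=> PC PX PD PM f; rewrite (mpolyE f).
apply: big_rec => [|m h _ Ph]; first by rewrite -mpolyC0.
apply: (PD _ _ _ Ph); rewrite -mul_mpolyC mpolyXE_id; apply: (PM _ _ (PC _)).
apply: big_rec => [|i r _ Pr]; first by rewrite -mpolyC1.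
apply: (PM _ _ _ Pr); elim: (m i) => [|c Pc]; first by rewrite expr0 -mpolyC1.
by rewrite exprS; apply: (PM _ _ (PX i) Pc).
Qed.

Lemma mderivXU (i j : 'I_n) : ('X_i : {mpoly R[n]})^`M(j) = ((i == j)%:R)%:MP.
Proof.
rewrite mderivX mnm1E; case: eqP => [->|_]; last by rewrite scale0r mpolyC0.
have -> : (U_(j) - U_(j) = 0 :> 'X_{1..n})%MM by apply/mnmP => l; rewrite mnmBE subnn mnmE.
by rewrite mpolyX0 scale1r.
Qed.

Lemma mderiv_comp_mpoly f lq (m : 'I_p) :
  (f \mPo lq)^`M(m) = \sum_(j < n) (tnth lq j)^`M(m) * (f^`M(j) \mPo lq).
Proof.
elim/mpoly_gen_ind: f m => [c|i|f g IHf IHg|f g IHf IHg] m.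
- rewrite comp_mpolyC mderivC big1 // => j _.
  by rewrite mderivC comp_mpolyC mpolyC0 mulr0.
- rewrite comp_mpolyXU -tnth_nth (bigD1 i) //= mderivXU eqxx comp_mpolyC mulr1.
  rewrite big1 ?addr0 // => j /negPf ji.
  by rewrite mderivXU eq_sym ji comp_mpolyC mpolyC0 mulr0.
- rewrite comp_mpolyD mderivD IHf IHg -big_split; apply: eq_bigr => j _.
  by rewrite mderivD comp_mpolyD mulrDr.
- rewrite rmorphM mderivM IHf IHg mulr_suml mulr_sumr -big_split /=.
  by apply: eq_bigr => j _; rewrite mderivM rmorphD !rmorphM /=; ring.
Qed.

Lemma dderiv_comp_mpoly (v x : 'I_p -> R) f lq :
  dderiv v x (f \mPo lq) =
  dderiv (fun j => dderiv v x (tnth lq j)) (fun j => (tnth lq j).@[x]) f.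
Proof.
rewrite /dderiv; under eq_bigr do rewrite mderiv_comp_mpoly rmorph_sum mulr_sumr.
rewrite exchange_big /=; apply: eq_bigr => j _.
rewrite mulr_suml; apply: eq_bigr => m _.
by rewrite rmorphM /= comp_mpoly_meval mulrA.
Qed.

End Composition.

Lemma eq_dderiv (R : comNzRingType) n (v v' x x' : 'I_n -> R) (f : {mpoly R[n]}) :
  v =1 v' -> x =1 x' -> dderiv v x f = dderiv v' x' f.
Proof.
by move=> ev ex; apply: eq_bigr => m _; rewrite ev (meval_eq _ ex).
Qed.

Section Leibniz.
Variables (R : comNzRingType) (n : nat) (v x : 'I_n -> R).
Implicit Types p q : {mpoly R[n]}.

Lemma dderivD p q : dderiv v x (p + q) = dderiv v x p + dderiv v x q.
Proof. by rewrite /dderiv -big_split; apply: eq_bigr => m _; rewrite mderivD mevalD mulrDr. Qed.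

Lemma dderivM p q : dderiv v x (p * q) = dderiv v x p * q.@[x] + p.@[x] * dderiv v x q.
Proof.
rewrite /dderiv mulr_suml mulr_sumr -big_split; apply: eq_bigr => m _ /=.
by rewrite mderivM mevalD !mevalM; ring.
Qed.

Lemma dderivXU i : dderiv v x 'X_i = v i.
Proof.
rewrite /dderiv (bigD1 i) //= mderivXU eqxx mevalC mulr1 big1 ?addr0 // => j /negPf ij.
by rewrite mderivXU eq_sym ij mevalC mulr0.
Qed.

Lemma dderiv_tangent_square p p' q q' :
  p.@[x] = 0 -> dderiv v x p = 0 -> q.@[x] = 0 -> dderiv v x (p * p' + q * (q * q')) = 0.
Proof.
by move=> p0 dp0 q0; rewrite dderivD !dderivM mevalM p0 dp0 q0 !mul0r !mulr0 !addr0.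
Qed.

End Leibniz.

Section Affine.
Variables (R : nzRingType) (n : nat).
Implicit Types (p r : {mpoly R[n]}).

Lemma msize_dhomog d p : p \is d.-homog -> (msize p <= d.+1)%N.
Proof.
by move/dhomogP => homp; rewrite msizeE; apply/bigmax_leqP_seq => m mp _; rewrite homp.
Qed.

Lemma msize2_affine r : (msize r <= 2)%N ->
  r = (r@_0)%:MP + \sum_(m < n) r@_U_(m) *: 'X_m.
Proof.
move=> r2; apply/mpolyP => mm; rewrite mcoeffD mcoeffC raddf_sum /=.
under eq_bigr do rewrite mcoeffZ mcoeffX.
case E: (mdeg mm) => [|[|d]].
- move/eqP: E; rewrite mdeg_eq0 => /eqP ->; rewrite eqxx mulr1 big1 ?addr0 // => m _.
  by rewrite mnm1_eq0 mulr0.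
- move/eqP/mdeg1P: E => [i /eqP ->]; rewrite mnm1_eq0 mulr0 add0r (bigD1 i) //=.
  rewrite eqxx mulr1 big1 ?addr0 // => j /negPf ji.
  have -> : (U_(j) == U_(i) :> 'X_{1..n})%MM = false.
    by apply/negP => /eqP/(congr1 (fun m : 'X_{1..n} => m i)); rewrite !mnm1E eqxx ji.
  by rewrite mulr0.
- have /msize_mdeg_ge : (msize r <= mdeg mm)%N by rewrite E; apply: leq_trans r2 _.
  rewrite mcoeff_msupp negbK => /eqP ->.
  have -> : (mm == 0)%MM = false by apply/negP => /eqP mm0; rewrite mm0 mdeg0 in E.
  rewrite mulr0 add0r big1 // => m _.
  have -> : (U_(m) == mm)%MM = false by apply/negP => /eqP mm1; rewrite -mm1 mdeg1 in E.
  by rewrite mulr0.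
Qed.

End Affine.

(** * Polynomial maps of the plane *)

Section Maps.
Variable k : closedFieldType.
Local Notation mp := {mpoly k[3]}.
Implicit Types (f g h : pmap k) (A B : 'I_3 -> 'I_3 -> k) (x v : vec3 k).
Implicit Types (a b c : pmap k) (t : k).

Definition id_map : pmap k := fun i => 'X_i.
Definition lin_map A : pmap k := fun i => \sum_(j < 3) A i j *: 'X_j.
Definition mapeval f x : vec3 k := fun i => (f i).@[x].

Lemma eq_compm f f' g g' : g =1 g' -> f =1 f' -> compm g f =1 compm g' f'.
Proof. by move=> eg ef i; rewrite /compm eg (eq_mktuple _ ef). Qed.

Lemma compmA f g h : compm h (compm g f) =1 compm (compm h g) f.
Proof.
move=> i; rewrite /compm [RHS]comp_mpolyA.
suff -> : [tuple tnth [tuple g j | j < 3] l \mPo [tuple f j | j < 3] | l < 3] =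
          [tuple g l \mPo [tuple f j | j < 3] | l < 3] by [].
by apply: eq_mktuple => l; rewrite tnth_mktuple.
Qed.

Lemma compm_idl f : compm id_map f =1 f.
Proof. by move=> i; rewrite /compm comp_mpolyXU -tnth_nth tnth_mktuple. Qed.

Lemma compm_idr f : compm f id_map =1 f.
Proof. by move=> i; rewrite /compm comp_mpoly_id. Qed.

Lemma compm_lin_map A B :
  compm (lin_map A) (lin_map B) =1 lin_map (fun i l => \sum_(j < 3) A i j * B j l).
Proof.
move=> i; rewrite /compm /lin_map rmorph_sum /=.
under eq_bigr do rewrite comp_mpolyZ comp_mpolyXU -tnth_nth tnth_mktuple scaler_sumr.
rewrite exchange_big /=; apply: eq_bigr => l _.
by rewrite scaler_suml; apply: eq_bigr => j _; rewrite scalerA.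
Qed.

Lemma lin_map_delta : lin_map (fun i l => (i == l)%:R) =1 id_map.
Proof. exact: sum_delta_scale. Qed.

Lemma dhomog_lin_map A i : lin_map A i \is 1.-homog.
Proof.
by apply: rpred_sum => j _; apply: dhomogZ; rewrite dhomogX; apply/eqP; apply: mdeg1.
Qed.

Lemma comp_lin_mapM A i (r : mp) (s : pmap k) :
  lin_map A i \mPo [tuple r * s j | j < 3] = r * (lin_map A i \mPo [tuple s j | j < 3]).
Proof.
rewrite /lin_map !rmorph_sum mulr_sumr /=; apply: eq_bigr => j _.
by rewrite !comp_mpolyZ !comp_mpolyXU -!tnth_nth !tnth_mktuple scalerAr.
Qed.

Lemma mapeval_compm f g x : mapeval (compm g f) x =1 mapeval g (mapeval f x).
Proof.
move=> i; rewrite /mapeval /compm comp_mpoly_meval; apply: meval_eq => j.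
by rewrite tnth_mktuple.
Qed.

Lemma mapeval_lin_map A x i : mapeval (lin_map A) x i = \sum_(j < 3) A i j * x j.
Proof. by rewrite /mapeval rmorph_sum /=; apply: eq_bigr => j _; rewrite mevalZ mevalXU. Qed.

Lemma mderiv_lin_map A i m : (lin_map A i)^`M(m) = (A i m)%:MP.
Proof.
have -> : (lin_map A i)^`M(m) = \sum_(j < 3) A i j *: ('X_j)^`M(m).
  apply: (big_rec2 (fun p q => p^`M(m) = q)) => [|j p q _ <-]; first exact: mderiv0.
  by rewrite mderivD mderivZ.
under eq_bigr do rewrite mderivXU -mul_mpolyC -rmorphM /=.
rewrite -rmorph_sum /=; congr (_%:MP).
by under eq_bigr do rewrite mulrC eq_sym; apply: sum_delta_mul.
Qed.

Lemma dderiv_lin_map A v x i : dderiv v x (lin_map A i) = mapeval (lin_map A) v i.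
Proof.
rewrite mapeval_lin_map /dderiv; apply: eq_bigr => m _.
by rewrite mderiv_lin_map mevalC mulrC.
Qed.

Lemma comp_lin_mapD A i (s s' : pmap k) :
  lin_map A i \mPo [tuple s j + s' j | j < 3] =
  (lin_map A i \mPo [tuple s j | j < 3]) + (lin_map A i \mPo [tuple s' j | j < 3]).
Proof.
rewrite /lin_map !raddf_sum /= -big_split; apply: eq_bigr => j _.
by rewrite !comp_mpolyZ !comp_mpolyXU -!tnth_nth !tnth_mktuple scalerDr.
Qed.

Lemma eq_is_identity_map f f' : f =1 f' -> is_identity_map f -> is_identity_map f'.
Proof. by move=> ff' [h [h0 fh]]; exists h; split=> // i; rewrite -ff'. Qed.

Lemma eq_birational_pair f f' g g' :
  f =1 f' -> g =1 g' -> birational_pair f g -> birational_pair f' g'.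
Proof.
move=> ff' gg' [[i fi] [[j gj] [gf fg]]]; split; [|split; [|split]].
- by exists i; rewrite -ff'.
- by exists j; rewrite -gg'.
- exact: eq_is_identity_map (eq_compm gg' ff') gf.
- exact: eq_is_identity_map (eq_compm ff' gg') fg.
Qed.

Definition quad_family (a b c : pmap k) : fpmap k :=
  fun i => (a i)%:P + (b i)%:P * 'X + (c i)%:P * 'X^2.

Lemma fiber_quad_family a b c t i :
  fiber (quad_family a b c) t i = a i + t%:MP * b i + t%:MP ^+ 2 * c i.
Proof. by rewrite /fiber /quad_family !hornerE /=; ring. Qed.

Lemma dhomog_quad_family d a b c :
  (forall i n, (quad_family a b c i)`_n \is d.-homog) <->
  [/\ homog_map d a, homog_map d b & homog_map d c].
Proof.
have coefE i n : (quad_family a b c i)`_n =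
    if n is 0 then a i else if n is 1 then b i else if n is 2 then c i else 0.
  by rewrite !coefD coefC !coefCM coefX coefXn; case: n => [|[|[|n]]] /=;
    rewrite ?mulr0 ?mulr1 ?addr0 ?add0r.
split=> [hom | [ha hb hc] i n].
  by split=> i; [move: (hom i 0%N) | move: (hom i 1%N) | move: (hom i 2%N)]; rewrite coefE.
by rewrite coefE; case: n => [|[|[|n]]] //; apply: dhomog0.
Qed.

Lemma homog_map_fiber_quad_family d a b c t :
  homog_map d a -> homog_map d b -> homog_map d c -> homog_map d (fiber (quad_family a b c) t).
Proof.
move=> ha hb hc i; rewrite fiber_quad_family -rmorphXn !mul_mpolyC.
by rewrite rpredD ?rpredD ?dhomogZ.
Qed.

End Maps.

Arguments id_map {k}.

Lemma eq_proj_eq (k : closedFieldType) (u u' v v' : vec3 k) :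
  u =1 u' -> v =1 v' -> proj_eq u v -> proj_eq u' v'.
Proof. by move=> uu vv [c [c0 uv]]; exists c; split=> // i; rewrite -uu -vv. Qed.

Lemma eq_on_line (k : closedFieldType) (a u u' : vec3 k) :
  u =1 u' -> on_line a u -> on_line a u'.
Proof. by move=> uu; rewrite /on_line /pairing (eq_bigr _ (fun i _ => congr1 _ (uu i))). Qed.

Lemma on_line_proj_eq (k : closedFieldType) (u a v : vec3 k) :
  proj_eq u a -> on_line u v <-> on_line a v.
Proof.
case=> c [c0 ua]; rewrite /on_line /pairing (eq_bigr (fun i => c * (a i * v i))).
  by rewrite -mulr_sumr; split=> [/eqP|->]; rewrite ?mulr0 // mulf_eq0 (negPf c0) => /eqP.
by move=> i _; rewrite ua mulrA.
Qed.

Lemma msize2_root_on_line (F : fieldType) n (r : {mpoly F[n]}) (c : 'I_n -> F) j :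
  (msize r <= 2)%N -> r@_U_(j) != 0 ->
  exists w, r.@[fun m => c m + w * (m == j)%:R] = 0.
Proof.
move=> r2 rj; have raff x : r.@[x] = r@_0 + \sum_(m < n) r@_U_(m) * x m.
  rewrite {1}(msize2_affine r2) mevalD mevalC rmorph_sum /=.
  by under eq_bigr do rewrite mevalZ mevalXU.
exists (- r.@[c] / r@_U_(j)); rewrite raff; under eq_bigr do rewrite mulrDr.
rewrite big_split /= addrA -raff (bigD1 j) //= big1 => [|m /negPf mj]; last first.
  by rewrite mj !mulr0.
by rewrite eqxx /= mulr1 addr0 mulrC divfK // addrN.
Qed.

Lemma neq0_eq (k : closedFieldType) (a b : k) : a = b -> b != 0 -> a != 0.
Proof. by move=> ->. Qed.

(* A nonconstant common factor of three quadrics is either a quadric, to which all three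
   are then proportional (excluded by [u] and [v]), or an affine form, which vanishes
   at some point of every line in a direction it is not constant along. *)
Lemma coprime3_of_evals (k : closedFieldType) (Q : pmap k) (i i' : 'I_3) (u v : vec3 k) :
  homog_map 2 Q -> (Q i').@[u] = 0 -> (Q i).@[u] != 0 -> (Q i').@[v] != 0 ->
  (forall j, exists c : vec3 k, forall w,
     exists l, (Q l).@[fun m => c m + w * (m == j)%:R] != 0) ->
  coprime3 Q.
Proof.
move=> homQ Qi'u Qiu Qi'v lines r /fin_all_exists [s Qrs].
have Qeval l x : (Q l).@[x] = r.@[x] * (s l).@[x] by rewrite Qrs mevalM.
have r0 : r != 0 by apply: contraNneq Qi'v => r0; rewrite Qeval r0 meval0 mul0r.
have s0 l : s l != 0 -> ((msize r + msize (s l)).-1 <= 3)%N.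
  by move=> sl0; rewrite -msizeM // -Qrs; apply: msize_dhomog.
have si'0 : s i' != 0 by apply: contraNneq Qi'v => s0'; rewrite Qeval s0' meval0 mulr0.
rewrite leqNgt; apply/negP => r_big.
have : msize r = 2%N \/ msize r = 3%N.
  have : (0 < msize (s i'))%N by rewrite lt0n msize_poly_eq0.
  by move: (s0 _ si'0) r_big; lia.
case=> [r2 | r3].
- have [j rj] : exists j, r@_U_(j) != 0.
    apply/existsP; apply: contraLR r_big; rewrite negb_exists => /forallP rU0.
    rewrite -leqNgt (msize2_affine (eq_leq r2)) big1 ?addr0 ?msizeC ?leq_b1 // => m _.
    by move: (rU0 m); rewrite negbK => /eqP ->; rewrite scale0r.
  have [c line] := lines j; have [w rw] := msize2_root_on_line c (eq_leq r2) rj.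
  by have [l] := line w; rewrite Qeval rw mul0r eqxx.
- have sC l : s l = ((s l)@_0)%:MP.
    have [->|sl0] := eqVneq (s l) 0; first by rewrite mcoeff0.
    by apply: msize1_polyC; move: (s0 _ sl0); rewrite r3; lia.
  move: Qi'u Qiu Qi'v; rewrite !Qeval (sC i') (sC i) !mevalC => /eqP.
  by rewrite mulf_eq0 => /orP [/eqP -> | /eqP ->]; rewrite ?mul0r ?mulr0 eqxx.
Qed.

(** * Change of projective frame *)

Section ChangeOfFrame.
Variable k : closedFieldType.
Local Notation mp := {mpoly k[3]}.
Variables P lam : 'I_3 -> 'I_3 -> k.
Hypothesis lamP : forall j l, \sum_(m < 3) lam j m * P l m = (j == l)%:R.
Hypothesis Plam : forall i m, \sum_(j < 3) P j i * lam j m = (i == m)%:R.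
Implicit Types (a b c f g : pmap k) (x y v : vec3 k) (t : k).

Local Notation L := (lin_map lam).
Local Notation Pt := (lin_map (fun i j => P j i)).
Local Notation Ltuple := [tuple L j | j < 3].

(* The rows [P j] form a frame whose dual is [lam]: [frame_pt y] is the point with
   coordinates [y] in the frame, and [conjm f] is the map with equation [f] in these
   coordinates, [x |-> Pt (f (L x))]. *)
Definition frame_pt y : vec3 k := mapeval Pt y.
Definition conjm f : pmap k := compm Pt (compm f L).

Lemma compm_coords_frame : compm L Pt =1 id_map.
Proof.
move=> i; rewrite compm_lin_map -lin_map_delta; apply: eq_bigr => l _.
by rewrite lamP.
Qed.

Lemma compm_frame_coords : compm Pt L =1 id_map.
Proof.
move=> i; rewrite compm_lin_map -lin_map_delta; apply: eq_bigr => l _.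
by rewrite Plam.
Qed.

Lemma compm_coordsK f : compm L (compm Pt f) =1 f.
Proof.
by move=> i; rewrite compmA (eq_compm compm_coords_frame (@frefl _ _ f)) compm_idl.
Qed.

Lemma conjm_compm f g : conjm (compm g f) =1 compm (conjm g) (conjm f).
Proof.
move=> i; rewrite -compmA; apply: eq_compm => // j.
by rewrite -[RHS]compmA (eq_compm (@frefl _ _ g) (compm_coordsK _)) compmA.
Qed.

Lemma conjmK f : compm L (compm (conjm f) Pt) =1 f.
Proof.
move=> i; rewrite (eq_compm (@frefl _ _ L) (fun j => esym (compmA _ _ _ j))).
rewrite compm_coordsK -compmA.
by rewrite (eq_compm (@frefl _ _ f) compm_coords_frame) compm_idr.
Qed.
Lemma comp_coords_eq0 (h : mp) : h \mPo Ltuple = 0 -> h = 0.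
Proof.
move=> h0; rewrite -[h]comp_mpoly_id.
have -> : [tuple 'X_i | i < 3] = [tuple tnth Ltuple i \mPo [tuple Pt j | j < 3] | i < 3].
  by apply: eq_mktuple => i; rewrite tnth_mktuple -[LHS]/(id_map i) -compm_coords_frame.
by rewrite -comp_mpolyA h0 comp_mpoly0.
Qed.

Lemma conjm_identity f : is_identity_map f -> is_identity_map (conjm f).
Proof.
case=> h [h0 fh]; exists (h \mPo Ltuple); split=> [|i].
  by apply: contra_neq h0; apply: comp_coords_eq0.
change (Pt i \mPo [tuple compm f L j | j < 3] = (h \mPo Ltuple) * 'X_i).
have -> : [tuple compm f L j | j < 3] = [tuple (h \mPo Ltuple) * L j | j < 3].
  apply: eq_mktuple => j.
  by rewrite /compm fh rmorphM /= comp_mpolyXU -tnth_nth tnth_mktuple.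
by rewrite comp_lin_mapM; congr (_ * _); apply: compm_frame_coords.
Qed.

Lemma conjm_neq0 f : (exists i, f i != 0) -> exists i, conjm f i != 0.
Proof.
case=> j fj; apply/existsP; apply: contraR fj; rewrite negb_exists => /forallP f0.
rewrite -(conjmK f) /compm.
have -> : [tuple compm (conjm f) Pt i | i < 3] = [tuple 0 * 0 | i < 3].
  apply: eq_mktuple => i; rewrite /compm.
  by move: (f0 i); rewrite negbK => /eqP ->; rewrite comp_mpoly0 mulr0.
by rewrite comp_lin_mapM mul0r.
Qed.

Lemma birational_pair_conjm f g :
  birational_pair f g -> birational_pair (conjm f) (conjm g).
Proof.
case=> [f0 [g0 [gf fg]]]; split; [|split; [|split]]; try exact: conjm_neq0.
- have [h [h0 hX]] := conjm_identity gf.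
  by exists h; split=> [|i]; [exact: h0 | rewrite -conjm_compm; exact: hX].
- have [h [h0 hX]] := conjm_identity fg.
  by exists h; split=> [|i]; [exact: h0 | rewrite -conjm_compm; exact: hX].
Qed.

Lemma homog_map_conjm d f : homog_map d f -> homog_map d (conjm f).
Proof.
move=> fd i; rewrite -[d]muln1; apply: dhomog_comp_mpoly; first exact: dhomog_lin_map.
move=> j; rewrite tnth_mktuple -[d]mul1n; apply: dhomog_comp_mpoly => // l.
by rewrite tnth_mktuple; apply: dhomog_lin_map.
Qed.

Lemma coprime3_conjm f : coprime3 f -> coprime3 (conjm f).
Proof.
move=> fcop r /fin_all_exists [s rs].
pose rP := r \mPo [tuple Pt j | j < 3].
have /msize1_polyC rPc : (msize rP <= 1)%N.
  apply: fcop => j; exists (L j \mPo [tuple s i \mPo [tuple Pt l | l < 3] | i < 3]).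
  rewrite -(conjmK f) /compm -comp_lin_mapM; congr (_ \mPo _).
  by apply: eq_mktuple => i; rewrite /compm rs rmorphM.
have -> : r = rP \mPo Ltuple.
  rewrite comp_mpolyA -[LHS]comp_mpoly_id; congr (_ \mPo _); apply: eq_mktuple => i.
  by rewrite tnth_mktuple -[LHS]/(id_map i) -compm_frame_coords.
by rewrite rPc comp_mpolyC msizeC leq_b1.
Qed.

Lemma coords_frame_pt y : mapeval L (frame_pt y) =1 y.
Proof. by move=> j; rewrite -mapeval_compm /mapeval compm_coords_frame mevalXU. Qed.

Lemma pairing_frame_pt j y : pairing (lam j) (frame_pt y) = y j.
Proof. by rewrite -(coords_frame_pt y j) mapeval_lin_map. Qed.

Lemma mapeval_conjm f y : mapeval (conjm f) (frame_pt y) =1 frame_pt (mapeval f y).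
Proof.
move=> i; rewrite mapeval_compm; apply: meval_eq => j.
by rewrite mapeval_compm; apply: meval_eq; apply: coords_frame_pt.
Qed.

Lemma frame_pt_not_proj_eq y y' j :
  y j != 0 -> y' j = 0 -> ~ proj_eq (frame_pt y) (frame_pt y').
Proof.
move=> yj y'j [c [_ yy']]; move: yj; rewrite -pairing_frame_pt.
rewrite /pairing (eq_bigr (fun i => c * (lam j i * frame_pt y' i))).
  by rewrite -mulr_sumr -/(pairing _ _) pairing_frame_pt y'j mulr0 eqxx.
by move=> i _; rewrite yy' mulrCA.
Qed.

Lemma dderiv_conjm f v y i :
  dderiv v (frame_pt y) (conjm f i) =
  frame_pt (fun j => dderiv (mapeval L v) y (f j)) i.
Proof.
rewrite [LHS]dderiv_comp_mpoly dderiv_lin_map; apply: meval_eq => j.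
rewrite tnth_mktuple dderiv_comp_mpoly; apply: eq_dderiv => l.
  by rewrite tnth_mktuple dderiv_lin_map.
by rewrite tnth_mktuple -(coords_frame_pt y l).
Qed.

Lemma fiber_conjm_quad_family a b c t :
  fiber (quad_family (conjm a) (conjm b) (conjm c)) t =1
  conjm (fiber (quad_family a b c) t).
Proof.
move=> i; rewrite fiber_quad_family.
rewrite -[RHS]/(Pt i \mPo [tuple compm (fiber (quad_family a b c) t) L j | j < 3]).
have -> : [tuple compm (fiber (quad_family a b c) t) L j | j < 3] =
    [tuple compm a L j + t%:MP * compm b L j + t%:MP ^+ 2 * compm c L j | j < 3].
  apply: eq_mktuple => j.
  by rewrite /compm fiber_quad_family !rmorphD !rmorphM /= !comp_mpolyC expr2.
by rewrite !comp_lin_mapD !comp_lin_mapM.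
Qed.

Lemma bir_family_conjm a b c a' b' c' :
  bir_family (quad_family a b c) (quad_family a' b' c') ->
  bir_family (quad_family (conjm a) (conjm b) (conjm c))
             (quad_family (conjm a') (conjm b') (conjm c')).
Proof.
case=> d [e [/dhomog_quad_family[ha hb hc] /dhomog_quad_family[ha' hb' hc'] birt]].
exists d, e; split.
- by apply/dhomog_quad_family; split; apply: homog_map_conjm.
- by apply/dhomog_quad_family; split; apply: homog_map_conjm.
- move=> t; apply: eq_birational_pair (birational_pair_conjm (birt t)) => i.
  + exact: (esym (fiber_conjm_quad_family a b c t i)).
  + exact: (esym (fiber_conjm_quad_family a' b' c' t i)).
Qed.

End ChangeOfFrame.

(** * Families given by ring formulas *)

(* Writing the standard maps as formulas natural in every commutative ring lets us
   compose, evaluate and substitute them by ring identities between abstract variables,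
   never computing with concrete polynomials. *)
Definition formula := forall R : comNzRingType, R -> R -> R -> 'I_3 -> R.

Definition natural_formula (F : formula) : Prop :=
  forall (R S : comNzRingType) (f : {rmorphism R -> S}) x y z j,
    f (F R x y z j) = F S (f x) (f y) (f z) j.

Definition quad_formula (F0 F1 F2 : formula) (R : comNzRingType) (t x y z : R) j : R :=
  F0 R x y z j + t * F1 R x y z j + t ^+ 2 * F2 R x y z j.

Lemma mk3_X (k : closedFieldType) j : mk3 'X_o0 'X_o1 'X_o2 j = 'X_j :> {mpoly k[3]}.
Proof. by case: (ord3P j) => [->|[->|->]]. Qed.

Definition fmap (k : closedFieldType) (F : formula) : pmap k := fun j => F _ 'X_o0 'X_o1 'X_o2 j.

Definition std_family (k : closedFieldType) (F0 F1 F2 : formula) : fpmap k :=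
  quad_family (fmap k F0) (fmap k F1) (fmap k F2).

Section QuadFormula.
Variables F0 F1 F2 : formula.
Hypotheses (nF0 : natural_formula F0) (nF1 : natural_formula F1) (nF2 : natural_formula F2).
Local Notation F := (quad_formula F0 F1 F2).

Lemma quad_formula_natural (R S : comNzRingType) (f : {rmorphism R -> S}) t x y z j :
  f (F t x y z j) = F (f t) (f x) (f y) (f z) j.
Proof. by rewrite /quad_formula !rmorphD !rmorphM nF0 nF1 nF2 expr2. Qed.

Variable k : closedFieldType.

Lemma fiber_std_family t j :
  fiber (std_family k F0 F1 F2) t j = F t%:MP 'X_o0 'X_o1 'X_o2 j.
Proof. exact: fiber_quad_family. Qed.

Lemma meval_fiber_std_family t (v : vec3 k) j :
  (fiber (std_family k F0 F1 F2) t j).@[v] = F t (v o0) (v o1) (v o2) j.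
Proof. by rewrite fiber_std_family (quad_formula_natural (meval v)) /= mevalC !mevalXU. Qed.

Lemma fiber_std_family_neq0 t :
  (forall j, F t 0 0 1 j = mk3 0 0 1 j) -> exists i, fiber (std_family k F0 F1 F2) t i != 0.
Proof.
move=> Fe2; exists o2; apply: contra_neq (oner_neq0 k) => F0e2.
by have := congr1 (meval (mk3 0 0 1)) F0e2; rewrite meval_fiber_std_family meval0 Fe2.
Qed.

End QuadFormula.

Section StdFamilyPair.
Variables F0 F1 F2 G0 G1 G2 : formula.
Hypotheses (nF0 : natural_formula F0) (nF1 : natural_formula F1) (nF2 : natural_formula F2).
Hypotheses (nG0 : natural_formula G0) (nG1 : natural_formula G1) (nG2 : natural_formula G2).
Local Notation F := (quad_formula F0 F1 F2).
Local Notation G := (quad_formula G0 G1 G2).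
Variable k : closedFieldType.

Lemma comp_fiber_std_family (g : pmap k) t i :
  fiber (std_family k G0 G1 G2) t i \mPo [tuple g m | m < 3] =
  G t%:MP (g o0) (g o1) (g o2) i.
Proof.
rewrite fiber_std_family (quad_formula_natural nG0 nG1 nG2 (comp_mpoly _)) /=.
by congr (G _ _ _ _ i); rewrite ?comp_mpolyC // comp_mpolyXU -tnth_nth tnth_mktuple.
Qed.

Lemma compm_fiber_std_family t i :
  compm (fiber (std_family k G0 G1 G2) t) (fiber (std_family k F0 F1 F2) t) i =
  G t%:MP (F t%:MP 'X_o0 'X_o1 'X_o2 o0) (F t%:MP 'X_o0 'X_o1 'X_o2 o1)
          (F t%:MP 'X_o0 'X_o1 'X_o2 o2) i.
Proof.
by rewrite /compm (eq_mktuple _ (fiber_std_family F0 F1 F2 t)) comp_fiber_std_family.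
Qed.

Lemma is_identity_map_compm_std_family (h : forall R : comNzRingType, R -> R -> R -> R -> R) t :
  (forall (R : comNzRingType) (t x y z : R) j,
     G t (F t x y z o0) (F t x y z o1) (F t x y z o2) j = h R t x y z * mk3 x y z j) ->
  (forall j, F t 0 0 1 j = mk3 0 0 1 j) -> (forall j, G t 0 0 1 j = mk3 0 0 1 j) ->
  is_identity_map (compm (fiber (std_family k G0 G1 G2) t) (fiber (std_family k F0 F1 F2) t)).
Proof.
move=> GF Fe2 Ge2.
have GFX i : compm (fiber (std_family k G0 G1 G2) t) (fiber (std_family k F0 F1 F2) t) i =
    h _ t%:MP 'X_o0 'X_o1 'X_o2 * 'X_i by rewrite compm_fiber_std_family GF mk3_X.
exists (h _ t%:MP 'X_o0 'X_o1 'X_o2); split=> //.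
apply: contra_neq (oner_neq0 k) => h0; have := congr1 (meval (mk3 0 0 1)) (GFX o2).
rewrite h0 mul0r meval0 compm_fiber_std_family (quad_formula_natural nG0 nG1 nG2 (meval _)) /=.
by rewrite !(quad_formula_natural nF0 nF1 nF2 (meval _)) /= mevalC !mevalXU !Fe2 Ge2.
Qed.

End StdFamilyPair.

Lemma bir_family_std_family (k : closedFieldType) (F0 F1 F2 G0 G1 G2 : formula)
    (hF hG : forall R : comNzRingType, R -> R -> R -> R -> R) :
  natural_formula F0 -> natural_formula F1 -> natural_formula F2 ->
  natural_formula G0 -> natural_formula G1 -> natural_formula G2 ->
  homog_map 2 (fmap k F0) -> homog_map 2 (fmap k F1) -> homog_map 2 (fmap k F2) ->
  homog_map 2 (fmap k G0) -> homog_map 2 (fmap k G1) -> homog_map 2 (fmap k G2) ->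
  (forall (R : comNzRingType) (t x y z : R) j,
     quad_formula G0 G1 G2 t (quad_formula F0 F1 F2 t x y z o0)
       (quad_formula F0 F1 F2 t x y z o1) (quad_formula F0 F1 F2 t x y z o2) j =
     hF R t x y z * mk3 x y z j) ->
  (forall (R : comNzRingType) (t x y z : R) j,
     quad_formula F0 F1 F2 t (quad_formula G0 G1 G2 t x y z o0)
       (quad_formula G0 G1 G2 t x y z o1) (quad_formula G0 G1 G2 t x y z o2) j =
     hG R t x y z * mk3 x y z j) ->
  (forall (t : k) j, quad_formula F0 F1 F2 t 0 0 1 j = mk3 0 0 1 j) ->
  (forall (t : k) j, quad_formula G0 G1 G2 t 0 0 1 j = mk3 0 0 1 j) ->
  bir_family (std_family k F0 F1 F2) (std_family k G0 G1 G2).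
Proof.
move=> nF0 nF1 nF2 nG0 nG1 nG2 hF0 hF1 hF2 hG0 hG1 hG2 GF FG Fe2 Ge2.
exists 2%N, 2%N; split; try by apply/dhomog_quad_family.
move=> t; split; [|split; [|split]].
- exact: fiber_std_family_neq0.
- exact: fiber_std_family_neq0.
- exact: is_identity_map_compm_std_family.
- exact: is_identity_map_compm_std_family.
Qed.

(** * The two standard families *)

(* [quad_formula zscale quadA1 zero_formula] and [quad_formula zscale quadB1 quadB2] are
   the families A_t and B_t of the header; the [_inv] formulas give their inverses. *)
Definition zscale : formula := fun R x y z => mk3 (z * x) (z * y) (z * z).
Definition zero_formula : formula := fun R x y z j => 0.
Definition quadA1 : formula := fun R x y z => mk3 (- (x * y)) (- (x * y)) (- (x * z)).
Definition quadA1_inv : formula := fun R x y z => mk3 0 (y * x - y * y) (z * x - z * y).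
Definition quadB1 : formula := fun R x y z => mk3 (- (y * y)) (- (y * y)) 0.
Definition quadB2 : formula := fun R x y z => mk3 0 0 (- (y * y)).
Definition quadB1_inv : formula :=
  fun R x y z => mk3 (y * y - x * y - x * y) (- (y * y)) (- (z * y) - z * y).
Definition quadB2_inv : formula := fun R x y z => mk3 0 0 (y * y).

Ltac natural_formula_tac :=
  let f := fresh "f" in
  by move=> ? ? f ? ? ? ?; rewrite (mk3_map f) ?(rmorph0, rmorphN, rmorphB, rmorphM).

Lemma zscale_natural : natural_formula zscale. Proof. natural_formula_tac. Qed.
Lemma zero_formula_natural : natural_formula zero_formula. Proof. by move=> *; rewrite rmorph0. Qed.
Lemma quadA1_natural : natural_formula quadA1. Proof. natural_formula_tac. Qed.
Lemma quadA1_inv_natural : natural_formula quadA1_inv. Proof. natural_formula_tac. Qed.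
Lemma quadB1_natural : natural_formula quadB1. Proof. natural_formula_tac. Qed.
Lemma quadB2_natural : natural_formula quadB2. Proof. natural_formula_tac. Qed.
Lemma quadB1_inv_natural : natural_formula quadB1_inv. Proof. natural_formula_tac. Qed.
Lemma quadB2_inv_natural : natural_formula quadB2_inv. Proof. natural_formula_tac. Qed.

Section Homogeneity.
Variable k : closedFieldType.
Local Notation mp := {mpoly k[3]}.

Lemma dhomog_mk3 d (a b c : mp) j :
  a \is d.-homog -> b \is d.-homog -> c \is d.-homog -> mk3 a b c j \is d.-homog.
Proof. by case: (ord3P j) => [->|[->|->]]. Qed.

Lemma dhomogXX (i j : 'I_3) : ('X_i * 'X_j : mp) \is 2.-homog.
Proof.
have hX m : ('X_m : mp) \is 1.-homog by rewrite dhomogX; apply/eqP; apply: mdeg1.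
exact: dhomogM (hX i) (hX j).
Qed.

Ltac homog_formula_tac :=
  move=> j; apply: dhomog_mk3;
  repeat first [apply: dhomogXX | apply: dhomog0 | rewrite rpredN | apply: rpredB].

Lemma zscale_homog : homog_map 2 (fmap k zscale). Proof. homog_formula_tac. Qed.
Lemma zero_formula_homog : homog_map 2 (fmap k zero_formula).
Proof. by move=> j; apply: dhomog0. Qed.
Lemma quadA1_homog : homog_map 2 (fmap k quadA1). Proof. homog_formula_tac. Qed.
Lemma quadA1_inv_homog : homog_map 2 (fmap k quadA1_inv). Proof. homog_formula_tac. Qed.
Lemma quadB1_homog : homog_map 2 (fmap k quadB1). Proof. homog_formula_tac. Qed.
Lemma quadB2_homog : homog_map 2 (fmap k quadB2). Proof. homog_formula_tac. Qed.
Lemma quadB1_inv_homog : homog_map 2 (fmap k quadB1_inv). Proof. homog_formula_tac. Qed.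
Lemma quadB2_inv_homog : homog_map 2 (fmap k quadB2_inv). Proof. homog_formula_tac. Qed.

End Homogeneity.

Section Identities.
Variables (R : comNzRingType) (t x y z : R).
Local Notation famA := (quad_formula zscale quadA1 zero_formula).
Local Notation famA_inv := (quad_formula zscale quadA1_inv zero_formula).
Local Notation famB := (quad_formula zscale quadB1 quadB2).
Local Notation famB_inv := (quad_formula zscale quadB1_inv quadB2_inv).

Ltac formula_ring :=
  let j := fresh "j" in move=> j; case: (ord3P j) => [->|[->|->]];
  cbv [quad_formula zscale zero_formula quadA1 quadA1_inv quadB1 quadB2 quadB1_inv quadB2_inv
       mk3 nat_of_ord]; ring.

Lemma famA_invK :
  forall j, famA_inv t (famA t x y z o0) (famA t x y z o1) (famA t x y z o2) j =
  z * (z - t * x) * (z - t * y) * mk3 x y z j.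
Proof. formula_ring. Qed.

Lemma famAK :
  forall j, famA t (famA_inv t x y z o0) (famA_inv t x y z o1) (famA_inv t x y z o2) j =
  z * (z + t * x - t * y) * (z - t * y) * mk3 x y z j.
Proof. formula_ring. Qed.

Lemma famB_invK :
  forall j, famB_inv t (famB t x y z o0) (famB t x y z o1) (famB t x y z o2) j =
  z * (z - t * y) * (z - t * y) * mk3 x y z j.
Proof. formula_ring. Qed.

Lemma famBK :
  forall j, famB t (famB_inv t x y z o0) (famB_inv t x y z o1) (famB_inv t x y z o2) j =
  (z - t * y) * (z - t * y) * (z - t * y - t * y) * mk3 x y z j.
Proof. formula_ring. Qed.

Lemma famA_e2 : forall j, famA t 0 0 1 j = mk3 0 0 1 j. Proof. formula_ring. Qed.
Lemma famA_inv_e2 : forall j, famA_inv t 0 0 1 j = mk3 0 0 1 j. Proof. formula_ring. Qed.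
Lemma famB_e2 : forall j, famB t 0 0 1 j = mk3 0 0 1 j. Proof. formula_ring. Qed.
Lemma famB_inv_e2 : forall j, famB_inv t 0 0 1 j = mk3 0 0 1 j. Proof. formula_ring. Qed.

Lemma famA_e0 : forall j, famA t 1 0 0 j = 0. Proof. formula_ring. Qed.
Lemma famA_e1 : forall j, famA t 0 1 0 j = 0. Proof. formula_ring. Qed.
Lemma famA_p3 : forall j, famA t 1 1 t j = 0. Proof. formula_ring. Qed.
Lemma famB_e0 : forall j, famB t 1 0 0 j = 0. Proof. formula_ring. Qed.
Lemma famB_p3 : forall j, famB t 1 1 t j = 0. Proof. formula_ring. Qed.

Lemma famBE : forall j, famB t x y z j = z * mk3 x y z j + y * (y * - (t * mk3 1 1 t j)).
Proof. formula_ring. Qed.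

End Identities.

Section StandardMaps.
Variable k : closedFieldType.
Local Notation qmapA := (std_family k zscale quadA1 zero_formula).
Local Notation qmapA_inv := (std_family k zscale quadA1_inv zero_formula).
Local Notation qmapB := (std_family k zscale quadB1 quadB2).
Local Notation qmapB_inv := (std_family k zscale quadB1_inv quadB2_inv).

Lemma meval_fiber_qmapA t y j :
  (fiber qmapA t j).@[y] = quad_formula zscale quadA1 zero_formula t (y o0) (y o1) (y o2) j.
Proof. exact: (meval_fiber_std_family zscale_natural quadA1_natural zero_formula_natural). Qed.

Lemma meval_fiber_qmapB t y j :
  (fiber qmapB t j).@[y] = quad_formula zscale quadB1 quadB2 t (y o0) (y o1) (y o2) j.
Proof. exact: (meval_fiber_std_family zscale_natural quadB1_natural quadB2_natural). Qed.

Lemma bir_family_qmapA : bir_family qmapA qmapA_inv.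
Proof.
apply: (bir_family_std_family (hF := fun R t x y z => z * (z - t * x) * (z - t * y))
                              (hG := fun R t x y z => z * (z + t * x - t * y) * (z - t * y)));
  do ?[exact: zscale_natural | exact: zero_formula_natural | exact: quadA1_natural
      | exact: quadA1_inv_natural | exact: zscale_homog | exact: zero_formula_homog
      | exact: quadA1_homog | exact: quadA1_inv_homog].
- by move=> R t x y z; apply: famA_invK.
- by move=> R t x y z; apply: famAK.
- by move=> t; apply: famA_e2.
- by move=> t; apply: famA_inv_e2.
Qed.

Lemma bir_family_qmapB : bir_family qmapB qmapB_inv.
Proof.
apply: (bir_family_std_family (hF := fun R t x y z => z * (z - t * y) * (z - t * y))
          (hG := fun R t x y z => (z - t * y) * (z - t * y) * (z - t * y - t * y)));
  do ?[exact: zscale_natural | exact: quadB1_natural | exact: quadB2_natural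
      | exact: quadB1_inv_natural | exact: quadB2_inv_natural | exact: zscale_homog
      | exact: quadB1_homog | exact: quadB2_homog | exact: quadB1_inv_homog
      | exact: quadB2_inv_homog].
- by move=> R t x y z; apply: famB_invK.
- by move=> R t x y z; apply: famBK.
- by move=> t; apply: famB_e2.
- by move=> t; apply: famB_inv_e2.
Qed.

Lemma is_identity_map_fiber0 F1 F2 : is_identity_map (fiber (std_family k zscale F1 F2) 0).
Proof.
exists 'X_o2; split=> [|j].
  apply: contra_neq (oner_neq0 k) => z0.
  by have := congr1 (meval (mk3 0 0 1)) z0; rewrite mevalXU meval0.
rewrite fiber_std_family /quad_formula rmorph0 mul0r expr0n /= mul0r !addr0.
by case: (ord3P j) => [->|[->|->]].
Qed.

Ltac eval_qmap meval_fiber :=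
  rewrite meval_fiber;
  cbv [quad_formula zscale zero_formula quadA1 quadB1 quadB2 mk3 nat_of_ord]; rewrite /=.

Lemma coprime3_fiber_qmapA t : [pchar k] =i pred0 -> t != 0 -> coprime3 (fiber qmapA t).
Proof.
move=> char0 t0; have two0 : (2 : k) != 0 by move/pcharf0P: char0 => ->.
apply: (@coprime3_of_evals _ _ o0 o1 (mk3 1 0 1) (mk3 0 1 1)).
- by apply: homog_map_fiber_quad_family;
    [exact: zscale_homog | exact: quadA1_homog | exact: zero_formula_homog].
- by eval_qmap meval_fiber_qmapA; ring.
- by eval_qmap meval_fiber_qmapA; apply: (neq0_eq (b := 1)); [ring | exact: oner_neq0].
- by eval_qmap meval_fiber_qmapA; apply: (neq0_eq (b := 1)); [ring | exact: oner_neq0].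
move=> j; case: (ord3P j) => [->|[->|->]].
- exists (mk3 0 0 1) => w; have [->|w0] := eqVneq w 0; [exists o2 | exists o0];
    eval_qmap meval_fiber_qmapA.
    by apply: (neq0_eq (b := 1)); [ring | exact: oner_neq0].
  by apply: (neq0_eq (b := w)); first ring.
- exists (mk3 0 0 1) => w; exists o2; eval_qmap meval_fiber_qmapA.
  by apply: (neq0_eq (b := 1)); [ring | exact: oner_neq0].
- exists (mk3 1 2 0) => w; have [w2t|w2t] := eqVneq w (2 * t); [exists o1 | exists o0];
    eval_qmap meval_fiber_qmapA.
    by apply: (neq0_eq (b := 2 * t)); [rewrite w2t; ring | rewrite mulf_neq0].
  by apply: (neq0_eq (b := w - 2 * t)); [ring | rewrite subr_eq0].
Qed.

Lemma coprime3_fiber_qmapB t : t != 0 -> coprime3 (fiber qmapB t).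
Proof.
move=> t0; apply: (@coprime3_of_evals _ _ o0 o1 (mk3 1 0 1) (mk3 0 1 (t + 1))).
- by apply: homog_map_fiber_quad_family;
    [exact: zscale_homog | exact: quadB1_homog | exact: quadB2_homog].
- by eval_qmap meval_fiber_qmapB; ring.
- by eval_qmap meval_fiber_qmapB; apply: (neq0_eq (b := 1)); [ring | exact: oner_neq0].
- by eval_qmap meval_fiber_qmapB; apply: (neq0_eq (b := 1)); [ring | exact: oner_neq0].
move=> j; case: (ord3P j) => [->|[->|->]].
- exists (mk3 0 1 0) => w; exists o0; eval_qmap meval_fiber_qmapB.
  by apply: (neq0_eq (b := - t)); [ring | rewrite oppr_eq0].
- exists (mk3 0 0 1) => w; have [->|w0] := eqVneq w 0; [exists o2 | exists o0];
    eval_qmap meval_fiber_qmapB.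
    by apply: (neq0_eq (b := 1)); [ring | exact: oner_neq0].
  by apply: (neq0_eq (b := - (t * (w * w)))); [ring | rewrite oppr_eq0 !mulf_neq0].
- exists (mk3 0 1 0) => w; exists o0; eval_qmap meval_fiber_qmapB.
  by apply: (neq0_eq (b := - t)); [ring | rewrite oppr_eq0].
Qed.

Lemma dderiv_fiber_qmapB t (w : vec3 k) j :
  w o2 = 0 -> dderiv w (fun m => (m == o0)%:R) (fiber qmapB t j) = 0.
Proof.
move=> w2; rewrite fiber_std_family famBE mk3_X.
by apply: dderiv_tangent_square; rewrite ?mevalXU ?dderivXU.
Qed.

End StandardMaps.

(** * Transport to an arbitrary frame *)

Section FrameFamilies.
Variable k : closedFieldType.
Variables P lam : 'I_3 -> 'I_3 -> k.
Hypothesis lamP : forall j l, \sum_(m < 3) lam j m * P l m = (j == l)%:R.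
Hypothesis Plam : forall i m, \sum_(j < 3) P j i * lam j m = (i == m)%:R.

Definition frame_line_point : vfamily k := fun m => (P o0 m + P o1 m)%:P + (P o2 m)%:P * 'X.

Lemma vfiber_frame_line_point t : vfiber frame_line_point t =1 frame_pt P (mk3 1 1 t).
Proof.
move=> m; rewrite /vfiber /frame_line_point /frame_pt mapeval_lin_map big_ord3 !hornerE /=.
by rewrite ?mulr1 ?mulr0 ?addr0.
Qed.

Lemma frame_pt_row l : frame_pt P (fun j => (j == l)%:R) =1 P l.
Proof.
move=> m; rewrite /frame_pt mapeval_lin_map.
by under eq_bigr do rewrite mulrC eq_sym; rewrite sum_delta_mul.
Qed.

Lemma conjm_vanish f y :
  (forall j, (f j).@[y] = 0) -> forall i, (conjm P lam f i).@[frame_pt P y] = 0.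
Proof.
move=> f0 i; rewrite -[LHS]/(mapeval (conjm P lam f) (frame_pt P y) i) mapeval_conjm //.
by rewrite /frame_pt mapeval_lin_map big1 // => j _; rewrite /mapeval f0 mulr0.
Qed.

Lemma frame_pt_neq0 y j : y j != 0 -> exists i, frame_pt P y i != 0.
Proof.
move=> yj; apply/existsP; apply: contraR yj; rewrite negb_exists => /forallP y0.
rewrite -(pairing_frame_pt lamP) /pairing big1 // => i _.
by move: (y0 i); rewrite negbK => /eqP ->; rewrite mulr0.
Qed.

Lemma nonzero3_lam j : nonzero3 (lam j).
Proof.
apply/existsP; apply: contraT; rewrite negb_exists => /forallP lam0.
have := lamP j j; rewrite eqxx big1 => [/esym/eqP|i _]; first by rewrite oner_eq0.
by move: (lam0 i); rewrite negbK => /eqP ->; rewrite mul0r.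
Qed.

Lemma on_line_lam_row j l : j != l -> on_line (lam j) (P l).
Proof. by move/negPf => jl; rewrite /on_line /pairing lamP jl. Qed.

Lemma morph_A1_P2_frame_line_point : morph_A1_P2 frame_line_point.
Proof.
move=> t; have [i pi] := frame_pt_neq0 (oner_neq0 k : mk3 1 1 t o0 != 0).
by exists i; change (vfiber frame_line_point t i != 0); rewrite vfiber_frame_line_point.
Qed.

Lemma frame_line_point_not_row t l : l != o2 -> ~ proj_eq (vfiber frame_line_point t) (P l).
Proof.
move=> l2 /(eq_proj_eq (vfiber_frame_line_point t) (fun m => esym (frame_pt_row l m))).
case: (ord3P l) l2 => [->|[->|->]] // _.
  by apply: (frame_pt_not_proj_eq lamP (j := o1)); rewrite ?oner_eq0.
by apply: (frame_pt_not_proj_eq lamP (j := o0)); rewrite ?oner_eq0.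
Qed.

Lemma is_identity_map_fiber0_conjm F1 F2 :
  is_identity_map (fiber (quad_family (conjm P lam (fmap k zscale)) (conjm P lam (fmap k F1))
                                      (conjm P lam (fmap k F2))) 0).
Proof.
apply: (eq_is_identity_map (fun i => esym (fiber_conjm_quad_family P lam _ _ _ 0 i))).
by apply: (conjm_identity lamP Plam); apply: is_identity_map_fiber0.
Qed.

Lemma frame_familyA : [pchar k] =i pred0 ->
  exists (F G : fpmap k) (P3 : vfamily k),
    [/\ bir_family F G, morph_A1_P2 P3,
        forall t : k, t != 0 ->
          quadratic_with_base_points (fiber F t) (P o0) (Proper (P o1)) (vfiber P3 t),
        is_identity_map (fiber F 0) &
        collinear3 (P o0) (Proper (P o1)) (vfiber P3 0)].
Proof.
move=> char0.
exists (quad_family (conjm P lam (fmap k zscale)) (conjm P lam (fmap k quadA1))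
                    (conjm P lam (fmap k zero_formula))).
exists (quad_family (conjm P lam (fmap k zscale)) (conjm P lam (fmap k quadA1_inv))
                    (conjm P lam (fmap k zero_formula))).
exists frame_line_point; split.
- by apply: (bir_family_conjm lamP Plam); apply: bir_family_qmapA.
- exact: morph_A1_P2_frame_line_point.
- move=> t t0; exists 1, (conjm P lam (fiber (std_family k zscale quadA1 zero_formula) t)).
  split.
  + exact: oner_neq0.
  + apply: homog_map_conjm; apply: homog_map_fiber_quad_family;
      [exact: zscale_homog | exact: quadA1_homog | exact: zero_formula_homog].
  + by apply: (coprime3_conjm lamP Plam); apply: coprime3_fiber_qmapA.
  + by move=> i; rewrite mul1r fiber_conjm_quad_family.
  split.
  + move=> i; rewrite /passes_through -(meval_eq _ (frame_pt_row o0)).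
    by apply: conjm_vanish => j; rewrite meval_fiber_qmapA /= famA_e0.
  + move=> i; rewrite /passes_through -(meval_eq _ (frame_pt_row o1)).
    by apply: conjm_vanish => j; rewrite meval_fiber_qmapA /= famA_e1.
  + move=> i; rewrite /passes_through (meval_eq _ (vfiber_frame_line_point t)).
    by apply: conjm_vanish => j; rewrite meval_fiber_qmapA /= famA_p3.
  + exact: frame_line_point_not_row.
  + exact: frame_line_point_not_row.
- exact: is_identity_map_fiber0_conjm.
- exists (lam o2); split; [exact: nonzero3_lam | split; [exact: on_line_lam_row | split]].
    exact: on_line_lam_row.
  apply: (eq_on_line (fun m => esym (vfiber_frame_line_point 0 m))).
  by rewrite /on_line (pairing_frame_pt lamP).
Qed.

Lemma frame_familyB a : proj_eq (lam o2) a ->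
  exists (F G : fpmap k) (P3 : vfamily k),
    [/\ bir_family F G, morph_A1_P2 P3,
        forall t : k, t != 0 ->
          quadratic_with_base_points (fiber F t) (P o0) (InfNear a) (vfiber P3 t),
        is_identity_map (fiber F 0) &
        collinear3 (P o0) (InfNear a) (vfiber P3 0)].
Proof.
move=> lam2a.
exists (quad_family (conjm P lam (fmap k zscale)) (conjm P lam (fmap k quadB1))
                    (conjm P lam (fmap k quadB2))).
exists (quad_family (conjm P lam (fmap k zscale)) (conjm P lam (fmap k quadB1_inv))
                    (conjm P lam (fmap k quadB2_inv))).
exists frame_line_point; split.
- by apply: (bir_family_conjm lamP Plam); apply: bir_family_qmapB.
- exact: morph_A1_P2_frame_line_point.
- move=> t t0; exists 1, (conjm P lam (fiber (std_family k zscale quadB1 quadB2) t)).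
  split.
  + exact: oner_neq0.
  + apply: homog_map_conjm; apply: homog_map_fiber_quad_family;
      [exact: zscale_homog | exact: quadB1_homog | exact: quadB2_homog].
  + by apply: (coprime3_conjm lamP Plam); apply: coprime3_fiber_qmapB.
  + by move=> i; rewrite mul1r fiber_conjm_quad_family.
  have Qp1 i : (conjm P lam (fiber (std_family k zscale quadB1 quadB2) t) i).@[P o0] = 0.
    rewrite -(meval_eq _ (frame_pt_row o0)).
    by apply: conjm_vanish => j; rewrite meval_fiber_qmapB /= famB_e0.
  split=> //.
  + move=> i; split=> // q /(on_line_proj_eq _ lam2a) q2.
    change (dderiv q (P o0) (conjm P lam (fiber (std_family k zscale quadB1 quadB2) t) i) = 0).
    rewrite (eq_dderiv _ (@frefl _ _ q) (fun m => esym (frame_pt_row o0 m))) dderiv_conjm //.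
    rewrite /frame_pt mapeval_lin_map big1 // => j _; rewrite dderiv_fiber_qmapB ?mulr0 //.
    by rewrite mapeval_lin_map.
  + move=> i; rewrite /passes_through (meval_eq _ (vfiber_frame_line_point t)).
    by apply: conjm_vanish => j; rewrite meval_fiber_qmapB /= famB_p3.
  + exact: frame_line_point_not_row.
- exact: is_identity_map_fiber0_conjm.
- apply/(on_line_proj_eq _ lam2a).
  apply: (eq_on_line (fun m => esym (vfiber_frame_line_point 0 m))).
  by rewrite /on_line (pairing_frame_pt lamP).
Qed.

End FrameFamilies.

(** * Frames adapted to the given points *)

Section Frames.
Variable k : closedFieldType.
Implicit Types (u v w a p q x : vec3 k).

Definition cross u v : vec3 k :=
  mk3 (u o1 * v o2 - u o2 * v o1) (u o2 * v o0 - u o0 * v o2) (u o0 * v o1 - u o1 * v o0).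

Definition unit3 (m : 'I_3) : vec3 k := fun i => (i == m)%:R.

(* The rows of the inverse of the matrix with rows [u], [v], [w], by Cramer's rule. *)
Definition frame_dual u v w : 'I_3 -> 'I_3 -> k :=
  fun j m => mk3 (cross v w) (cross w u) (cross u v) j m / pairing w (cross u v).

Lemma mul_frame_dual_rows u v w : pairing w (cross u v) != 0 ->
  forall j l, \sum_(m < 3) frame_dual u v w j m * mk3 u v w l m = (j == l)%:R.
Proof.
rewrite /frame_dual /pairing big_ord3 => det j l.
case: (ord3P j) => [->|[->|->]]; case: (ord3P l) => [->|[->|->]];
  rewrite big_ord3; cbv [mk3 cross nat_of_ord] in det |- *; rewrite /=; field; exact: det.
Qed.

Lemma mul_rows_frame_dual u v w : pairing w (cross u v) != 0 ->
  forall i m, \sum_(j < 3) mk3 u v w j i * frame_dual u v w j m = (i == m)%:R.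
Proof.
rewrite /frame_dual /pairing big_ord3 => det i m.
case: (ord3P i) => [->|[->|->]]; case: (ord3P m) => [->|[->|->]];
  rewrite big_ord3; cbv [mk3 cross nat_of_ord] in det |- *; rewrite /=; field; exact: det.
Qed.

Lemma pairing_unit3 m x : pairing (unit3 m) x = x m.
Proof. by rewrite /pairing /unit3; under eq_bigr do rewrite eq_sym; apply: sum_delta_mul. Qed.

Lemma pairingC x y : pairing x y = pairing y x.
Proof. by apply: eq_bigr => i _; rewrite mulrC. Qed.

Lemma cross_cross a w u m :
  cross u (cross a w) m = a m * pairing u w - w m * pairing u a.
Proof.
by rewrite /pairing !big_ord3; case: (ord3P m) => [->|[->|->]]; cbv [cross mk3 nat_of_ord]; ring.
Qed.

Lemma cross_neq0 p q : nonzero3 p -> nonzero3 q -> ~ proj_eq q p -> exists m, cross p q m != 0.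
Proof.
move=> [i pi] [l ql] qp; apply/existsP; apply: contraT; rewrite negb_exists => /forallP c0.
have cpq j : cross p q j = 0 by apply/eqP; move: (c0 j); rewrite negbK.
have qp_prop m : p m * q i = q m * p i.
  have : cross (unit3 i) (cross p q) m = 0.
    by rewrite {1}/cross !cpq; case: (ord3P m) => [->|[->|->]]; rewrite /= !mulr0 subrr.
  by rewrite cross_cross !pairing_unit3 => /eqP; rewrite subr_eq0 => /eqP.
exfalso; apply: qp; exists (q i / p i); split=> [|m].
  rewrite mulf_neq0 ?invr_eq0 //; apply: contra_neq ql => qi0.
  by apply/eqP; rewrite -(mulIr_eq0 _ (mulIf pi)) -qp_prop qi0 mulr0.
by rewrite mulrAC [q i * _]mulrC qp_prop mulfK.
Qed.

End Frames.

Theorem lemma4p1 (k : closedFieldType) (char0 : [pchar k] =i pred0)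
    (p1 : vec3 k) (p2 : bpoint k) :
  nonzero3 p1 -> first_nbhd_or_distinct p1 p2 ->
  exists (F G : fpmap k) (P : vfamily k),
    [/\ bir_family F G, morph_A1_P2 P,
        forall t : k, t != 0 ->
          quadratic_with_base_points (fiber F t) p1 p2 (vfiber P t),
        is_identity_map (fiber F 0) &
        collinear3 p1 p2 (vfiber P 0)].
Proof.
move=> p1_nz; case: p2 => [q [q_nz q_p1] | a [a_nz a_p1]].
  have [m pq] := cross_neq0 p1_nz q_nz q_p1.
  have det : pairing (unit3 k m) (cross p1 q) != 0 by rewrite pairing_unit3.
  exact: frame_familyA (mul_frame_dual_rows det) (mul_rows_frame_dual det) char0.
(* [v] lies on the line [a], so [cross p1 v] is proportional to [a]: in the frame
   [(p1, v, e_m)] the line [a] is the third coordinate line. *)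
have [[j p1j] [m am]] := (p1_nz, a_nz).
pose v := cross a (unit3 k j).
have p1v l : cross p1 v l = p1 j * a l.
  rewrite cross_cross [pairing p1 _]pairingC pairing_unit3 [pairing p1 a]pairingC.
  by move: a_p1; rewrite /on_line => ->; rewrite mulr0 subr0 mulrC.
have det : pairing (unit3 k m) (cross p1 v) != 0 by rewrite pairing_unit3 p1v mulf_neq0.
apply: (frame_familyB (mul_frame_dual_rows det) (mul_rows_frame_dual det)).
exists (p1 j / pairing (unit3 k m) (cross p1 v)); split=> [|l].
  by rewrite mulf_neq0 ?invr_eq0.
by cbv [frame_dual mk3 nat_of_ord]; rewrite p1v mulrAC.
Qed.
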